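(* For every $t=0,1,\dots,T-2$ and every $x\in\mathbb R$, $$\bar\omega_t(x)\le\bar\psi_t(\theta,S^U_t)+\bar\psi_t\big(\theta,\max(x,S^U_t)\big)-\gamma_t\theta+\alpha\,\bar\omega_{t+1}\big(\theta+\max(x,S^U_t)\big).$$
   Context: Model. Fix an integer horizon $T\ge 2$, a discount factor $\alpha\in(0,1]$, and for $t=0,\dots,T-1$: unit ordering costs $c_t\in\mathbb R$, a salvage coefficient $c_T\in\mathbb R$, setup costs $K_t\ge 0$, functions $G_t:\mathbb R\to\mathbb R$, and independent nonnegative random demands $D_0,\dots,D_{T-1}$ with right-continuous distribution functions $F_t$ and finite means; all expectations appearing are assumed finite. Put $C_t(y)=(c_t-\alpha c_{t+1})y+G_t(y)+\alpha c_{t+1}E[D_t]$. Standing assumptions: (i) each $C_t$ is convex with $C_t(y)\to+\infty$ as $|y|\to\infty$; (ii) $K_t\ge \alpha K_{t+1}$ for $t=0,\dots,T-2$; (iii) there are constants $\gamma_t\ge 0$ with $|C_t(x)-C_t(y)|\le\gamma_t|x-y|$ for all $x,y$. Grid construction. Fix $\theta>0$, $z_m=m\theta$, $Z_\theta=\{z_m:m\in\mathbb Z\}$, $f_t(n)=F_t(z_{n+1})-F_t(z_n)$ ($n\ge -1$). $C^m_t=\min\{y: C_t(y)=\min_x C_t(x)\}$; with $z_{n_0}<C^m_t\le z_{n_0+1}$, $S^U_t=\min\{z_m\in Z_\theta: z_m\ge C^m_t,\ C_t(z_m)>C_t(z_{n_0})+K_t\}$. $s_{T-1}$ is a point with $s_{T-1}\le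 C^m_{T-1}$, $C_{T-1}(s_{T-1})=C_{T-1}(C^m_{T-1})+K_{T-1}$; $\bar I_{T-1}=s_{T-1}$. For $t=T-2,\dots,0$: $I_t=\max\{z_m\in Z_\theta: z_m<\min(\bar I_{t+1}-\theta,C^m_t)\}$, $\bar I_t=\max\{z_m\in Z_\theta: z_m\le I_t,\ C_t(z_m)>C_t(I_t)+K_t\}+\theta$. $H_{T-1}=C_{T-1}$, $S_{T-1}=C^m_{T-1}$; $V_t(y)=H_t(S_t)+K_t$ for $y<s_t$, $V_t(y)=H_t(y)$ for $y\ge s_t$. For $t=T-2,\dots,0$: $H_t(y)=C_t(y)+\alpha\sum_{n=-1}^\infty V_{t+1}(y-z_n)f_t(n)$; $S_t=\max\{z_m\in Z_\theta: I_t\le z_m\le S^U_t,\ H_t(z_m)=\min\{H_t(z_n):z_n\in Z_\theta, I_t\le z_n\le S^U_t\}\}$; $s_t=S_t$ if $K_t=0$, else $s_t=\min\{z_m\in Z_\theta:\bar I_t\le z_m\le S_t,\ H_t(z_m)\le H_t(S_t)+K_t\}$. Estimate functions. $\psi_{T-1}(x,y)=\bar\psi_{T-1}(x,y)=\gamma_{T-1}x$; $\varphi_{T-1}(x,y)=\bar\varphi_{T-1}(x,y)=0$ if $y<s_{T-1}$ and $=\gamma_{T-1}x$ if $y\ge s_{T-1}$. For $t=0,\dots,T-2$, with $n$ the integer such that $z_{n-1}\le y-s_{t+1}<z_n$: $\psi_t(x,y)=\gamma_tx$ if $y<s_{t+1}-\theta$, else $\psi_t(x,y)=\gamma_tx+\alpha\sum_{m=-1}^{n-1}\varphi_{t+1}(x,y-z_m)f_t(m)$;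 $\varphi_t(x,y)=0$ if $y<s_t$, $=\psi_t(y-s_t,y)$ if $y\ge s_t$ and $y-x<s_t$, $=\psi_t(x,y)$ if $y\ge s_t$ and $y-x\ge s_t$. Likewise $\bar\psi_t(x,y)=\gamma_tx$ if $y<s_{t+1}-\theta$, else $\bar\psi_t(x,y)=\gamma_tx+\alpha\sum_{m=-1}^{n-1}\bar\varphi_{t+1}(x,y-z_m)f_t(m)$; $\bar\varphi_t(x,y)=0$ if $y<s_t$, $=\bar\psi_t(y-s_t+\theta,y)$ if $y\ge s_t$ and $y-x<s_t$, $=\bar\psi_t(x,y)$ if $y\ge s_t$ and $y-x\ge s_t$. Error-bound functions. $\omega_{T-1}\equiv\bar\omega_{T-1}\equiv 0$, $\eta_{T-1}=0$. For $t=T-2,\dots,0$: $\omega_t(x)=\psi_t(\theta,x)-\gamma_t\theta+\alpha\sum_{n=-1}^\infty\bar\omega_{t+1}(x-z_n)f_t(n)$; $\eta_t=\bar\psi_t(\theta,S^U_t)+\omega_t(S^U_t)$; $\bar\omega_t(x)=\eta_t$ if $x\le S^U_t$ and $\bar\omega_t(x)=\max(\eta_t,\omega_t(x))$ if $x>S^U_t$. *)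

From Stdlib Require Import Reals ZArith ClassicalEpsilon.
From Coquelicot Require Import Coquelicot.
Open Scope R_scope.

(* Data of the model.  Indices t = 0 .. hor-1 (cost also has index hor:
   the salvage coefficient c_T).  Fd t is the distribution function F_t of
   the demand D_t and meanD t is E[D_t]. *)
Record model := Model {
  hor : nat;
  alpha : R;                (* discount factor *)
  theta : R;
  cost : nat -> R;
  setup : nat -> R;
  Gf : nat -> R -> R;
  Fd : nat -> R -> R;
  meanD : nat -> R;
  gam : nat -> R
}.

Definition Cf (M : model) (t : nat) (y : R) : R :=
  (cost M t - alpha M * cost M (t + 1)) * y + Gf M t y
  + alpha M * cost M (t + 1) * meanD M t.

Definition z (M : model) (m : Z) : R := IZR m * theta M.

Definition f (M : model) (t : nat) (n : Z) : R :=
  Fd M t (z M (n + 1)) - Fd M t (z M n).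

Definition the_min (P : R -> Prop) : R :=
  epsilon (inhabits 0) (fun y => P y /\ forall x, P x -> y <= x).

Definition grid_max (M : model) (P : R -> Prop) : R :=
  epsilon (inhabits 0)
    (fun y => (exists m, y = z M m) /\ P y /\ forall m, P (z M m) -> z M m <= y).

Definition grid_min (M : model) (P : R -> Prop) : R :=
  epsilon (inhabits 0)
    (fun y => (exists m, y = z M m) /\ P y /\ forall m, P (z M m) -> y <= z M m).

Definition gidx (M : model) (u : R) : Z :=
  epsilon (inhabits 0%Z) (fun n => z M (n - 1) <= u < z M n).

Definition gsum (a : Z -> R) : R := Series (fun j : nat => a (Z.of_nat j - 1)%Z).

Definition fsum (a : Z -> R) (N : Z) : R :=
  sum_f_R0 (fun j : nat => a (Z.of_nat j - 1)%Z) (Z.to_nat N).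

Definition Cm (M : model) (t : nat) : R :=
  the_min (fun y => forall x, Cf M t y <= Cf M t x).

Definition zn0 (M : model) (t : nat) : R := grid_max M (fun y => y < Cm M t).

Definition SU (M : model) (t : nat) : R :=
  grid_min M (fun y => Cm M t <= y /\ Cf M t y > Cf M t (zn0 M t) + setup M t).

Definition sT1 (M : model) : R :=
  epsilon (inhabits 0) (fun s => s <= Cm M (hor M - 1) /\
     Cf M (hor M - 1) s = Cf M (hor M - 1) (Cm M (hor M - 1)) + setup M (hor M - 1)).

Record stage := Stage { st_Ibar : R; st_H : R -> R; st_S : R; st_s : R }.

Definition Vof (p : stage) (Kt : R) (y : R) : R :=
  if Rlt_dec y (st_s p) then st_H p (st_S p) + Kt else st_H p y.

(* stg M k is the stage of period t = T-1-k *)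
Fixpoint stg (M : model) (k : nat) : stage :=
  match k with
  | O => Stage (sT1 M) (Cf M (hor M - 1)) (Cm M (hor M - 1)) (sT1 M)
  | S k' =>
    let t := (hor M - 2 - k')%nat in
    let p := stg M k' in
    let I := grid_max M (fun y => y < Rmin (st_Ibar p - theta M) (Cm M t)) in
    let Ib := grid_max M (fun y => y <= I /\ Cf M t y > Cf M t I + setup M t)
              + theta M in
    let V := Vof p (setup M (t + 1)) in
    let H := fun y => Cf M t y + alpha M * gsum (fun n => V (y - z M n) * f M t n) in
    let Sv := grid_max M (fun y => I <= y <= SU M t /\
                 forall m, I <= z M m <= SU M t -> H y <= H (z M m)) in
    let sv := if Req_EM_T (setup M t) 0 then Sv
              else grid_min M (fun y => Ib <= y <= Sv /\ H y <= H Sv + setup M t) in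
    Stage Ib H Sv sv
  end.

Definition stage_of (M : model) (t : nat) : stage := stg M (hor M - 1 - t).
Definition Hf (M : model) (t : nat) : R -> R := st_H (stage_of M t).
Definition Sf (M : model) (t : nat) : R := st_S (stage_of M t).
Definition sf (M : model) (t : nat) : R := st_s (stage_of M t).
Definition Vf (M : model) (t : nat) : R -> R := Vof (stage_of M t) (setup M t).

(* estimate functions: est M bar k = (psi_t, phi_t) (bar = false) or
   (psibar_t, phibar_t) (bar = true), for t = T-1-k *)
Fixpoint est (M : model) (bar : bool) (k : nat) : (R -> R -> R) * (R -> R -> R) :=
  match k with
  | O => (fun x _ => gam M (hor M - 1) * x,
          fun x y => if Rlt_dec y (sf M (hor M - 1)) then 0
                     else gam M (hor M - 1) * x)
  | S k' =>
    let t := (hor M - 2 - k')%nat in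
    let ph' := snd (est M bar k') in
    let s1 := sf M (t + 1) in
    let st := sf M t in
    let ps := fun x y =>
      if Rlt_dec y (s1 - theta M) then gam M t * x
      else gam M t * x + alpha M *
             fsum (fun m => ph' x (y - z M m) * f M t m) (gidx M (y - s1)) in
    (ps, fun x y =>
      if Rlt_dec y st then 0
      else if Rlt_dec (y - x) st then
             ps (if bar then y - st + theta M else y - st) y
           else ps x y)
  end.

Definition psi (M : model) (t : nat) := fst (est M false (hor M - 1 - t)).
Definition psib (M : model) (t : nat) := fst (est M true (hor M - 1 - t)).

(* error-bound functions: om M k = (omega_t, omegabar_t, eta_t), t = T-1-k *)
Fixpoint om (M : model) (k : nat) : (R -> R) * (R -> R) * R :=
  match k with
  | O => (fun _ => 0, fun _ => 0, 0)
  | S k' =>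
    let t := (hor M - 2 - k')%nat in
    let ob' := snd (fst (om M k')) in
    let w := fun x => psi M t (theta M) x - gam M t * theta M
                      + alpha M * gsum (fun n => ob' (x - z M n) * f M t n) in
    let eta := psib M t (theta M) (SU M t) + w (SU M t) in
    (w, fun x => if Rle_dec x (SU M t) then eta else Rmax eta (w x), eta)
  end.

Definition omega (M : model) (t : nat) : R -> R := fst (fst (om M (hor M - 1 - t))).
Definition omegab (M : model) (t : nat) : R -> R := snd (fst (om M (hor M - 1 - t))).
Definition eta (M : model) (t : nat) : R := snd (om M (hor M - 1 - t)).

(* F is the distribution function of a nonnegative random variable
   with finite mean m = E[D] = int_0^oo (1 - F) *)
Definition nonneg_distribution (F : R -> R) (m : R) : Prop :=
  (forall x y, x <= y -> F x <= F y) /\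
  (forall x, filterlim F (at_right x) (locally (F x))) /\
  (forall x, x < 0 -> F x = 0) /\
  filterlim F (Rbar_locally p_infty) (locally 1) /\
  is_RInt_gen (fun x => 1 - F x) (at_point 0) (Rbar_locally p_infty) m.

Definition convex (g : R -> R) : Prop :=
  forall x y l, 0 <= l <= 1 -> g (l * x + (1 - l) * y) <= l * g x + (1 - l) * g y.

Definition coercive (g : R -> R) : Prop :=
  forall A, exists B, forall y, B < Rabs y -> A < g y.

Definition standing_assumptions (M : model) : Prop :=
  (2 <= hor M)%nat /\
  0 < alpha M <= 1 /\
  0 < theta M /\
  (forall t, (t <= hor M - 1)%nat -> 0 <= setup M t) /\
  (forall t, (t <= hor M - 1)%nat -> nonneg_distribution (Fd M t) (meanD M t)) /\
  (forall t, (t <= hor M - 1)%nat -> convex (Cf M t) /\ coercive (Cf M t)) /\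
  (forall t, (t <= hor M - 2)%nat -> setup M t >= alpha M * setup M (t + 1)) /\
  (forall t, (t <= hor M - 1)%nat -> 0 <= gam M t /\
     forall x y, Rabs (Cf M t x - Cf M t y) <= gam M t * Rabs (x - y)) /\
  (* all expectations appearing are finite *)
  (forall t, (t <= hor M - 2)%nat -> forall y,
     ex_series (fun j : nat => Rabs (Vf M (t + 1) (y - z M (Z.of_nat j - 1))
                                     * f M t (Z.of_nat j - 1)))) /\
  (forall t, (t <= hor M - 2)%nat -> forall x,
     ex_series (fun j : nat => Rabs (omegab M (t + 1) (x - z M (Z.of_nat j - 1))
                                     * f M t (Z.of_nat j - 1)))).

(* Since omegabar_t equals eta_t below S^U_t and max(eta_t, omega_t) above it, everything
   follows from one estimate: for u <= v,
     omega_t(u) <= psibar_t(theta, v) - gamma_t theta + alpha omegabar_{t+1}(v + theta).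
   It combines psi_t <= psibar_t and the monotonicity of psi_t in its second argument with
   the bound E[omegabar_{t+1}(u - z_n)] <= omegabar_{t+1}(u + theta): the grid demand points
   satisfy z_n >= -theta, the weights f_t(n) sum to at most 1, and omegabar_{t+1} is
   nonnegative and nondecreasing, which is itself proved by backward induction on t.
   Above S^U_t the extra summand psibar_t(theta, S^U_t) >= 0 is pure slack. *)

From Stdlib Require Import Reals Lra Lia ZArith ClassicalEpsilon.
From Coquelicot Require Import Coquelicot.
Open Scope R_scope.

Lemma Series_le_const (a : nat -> R) (c : R) :
  ex_series a -> (forall N, sum_f_R0 a N <= c) -> Series a <= c.
Proof.
  intros Ha Hc. apply Series_correct in Ha.
  apply (is_lim_seq_le (sum_n a) (fun _ => c) (Series a) c); [|exact Ha|apply is_lim_seq_const].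
  intros N. rewrite sum_n_Reals. apply Hc.
Qed.

Lemma Series_ge0 (a : nat -> R) : ex_series a -> (forall n, 0 <= a n) -> 0 <= Series a.
Proof.
  intros Ha H. apply Series_correct in Ha.
  apply (is_lim_seq_le (fun _ => 0) (sum_n a) 0 (Series a)); [|apply is_lim_seq_const|exact Ha].
  intros N. rewrite sum_n_Reals. apply cond_pos_sum, H.
Qed.

Lemma Series_weighted_le (a w : nat -> R) (c : R) :
  ex_series (fun n => a n * w n) -> (forall n, 0 <= w n) ->
  (forall N, sum_f_R0 w N <= 1) -> 0 <= c -> (forall n, a n <= c) ->
  Series (fun n => a n * w n) <= c.
Proof.
  intros Hex Hw Hw1 Hc Ha. apply Series_le_const; [exact Hex|]. intros N.
  apply Rle_trans with (sum_f_R0 (fun n => w n * c) N).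
  - apply sum_growing. intros n. rewrite (Rmult_comm (w n)). apply Rmult_le_compat_r; auto.
  - rewrite <- scal_sum. specialize (Hw1 N). nra.
Qed.

Lemma z_le (M : model) (m n : Z) : 0 < theta M -> (m <= n)%Z -> z M m <= z M n.
Proof. intros Ht Hmn. unfold z. apply Rmult_le_compat_r; [lra|]. apply IZR_le, Hmn. Qed.

Lemma gidx_spec (M : model) (u : R) :
  0 < theta M -> z M (gidx M u - 1) <= u < z M (gidx M u).
Proof.
  intros Ht. unfold gidx. apply epsilon_spec.
  exists (up (u / theta M)). destruct (archimed (u / theta M)) as [Hup1 Hup2].
  unfold z. rewrite minus_IZR.
  assert (Hq : u = u / theta M * theta M) by (field; lra).
  set (q := u / theta M) in *. split; nra.
Qed.

Lemma gidx_le (M : model) (u v : R) : 0 < theta M -> u <= v -> (gidx M u <= gidx M v)%Z.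
Proof.
  intros Ht Huv. destruct (gidx_spec M u Ht), (gidx_spec M v Ht).
  destruct (Z_le_gt_dec (gidx M u) (gidx M v)) as [|Hgt]; [assumption|].
  assert (z M (gidx M v) <= z M (gidx M u - 1)) by (apply z_le; lia || assumption). lra.
Qed.

Lemma fsum_ge0 (a : Z -> R) (N : Z) : (forall m, 0 <= a m) -> 0 <= fsum a N.
Proof. intros Ha. apply cond_pos_sum. intros; apply Ha. Qed.

Lemma fsum_le (a b : Z -> R) (N : Z) : (forall m, a m <= b m) -> fsum a N <= fsum b N.
Proof. intros Hab. apply sum_growing. intros; apply Hab. Qed.

Lemma fsum_le_upper (a : Z -> R) (N1 N2 : Z) :
  (forall m, 0 <= a m) -> (N1 <= N2)%Z -> fsum a N1 <= fsum a N2.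
Proof.
  intros Ha HN. unfold fsum.
  replace (Z.to_nat N2) with (Z.to_nat N1 + (Z.to_nat N2 - Z.to_nat N1))%nat by lia.
  induction (Z.to_nat N2 - Z.to_nat N1)%nat as [|d IH].
  - rewrite Nat.add_0_r. lra.
  - rewrite Nat.add_succ_r, tech5. pose proof (Ha (Z.of_nat (S (Z.to_nat N1 + d)) - 1)%Z). lra.
Qed.

Lemma nonneg_distribution_le1 (F : R -> R) (m : R) :
  nonneg_distribution F m -> forall x, F x <= 1.
Proof.
  intros [Hmono [_ [_ [Hlim _]]]] x. destruct (Rle_lt_dec (F x) 1) as [|Hgt]; [assumption|].
  exfalso. apply filterlim_locally with (eps := mkposreal (F x - 1) ltac:(lra)) in Hlim.
  destruct Hlim as [B HB]. pose proof (Rmax_l x B). pose proof (Rmax_r x B).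
  assert (Hbig : Rabs (F (Rmax x B + 1) - 1) < F x - 1) by (apply HB; lra).
  assert (F x <= F (Rmax x B + 1)) by (apply Hmono; lra).
  apply Rabs_lt_between in Hbig. lra.
Qed.

Section Demand_weights.
Variables (M : model) (t : nat).
Hypothesis theta_gt0 : 0 < theta M.
Hypothesis Fd_distribution : nonneg_distribution (Fd M t) (meanD M t).

Lemma f_ge0 (n : Z) : 0 <= f M t n.
Proof.
  destruct Fd_distribution as [Hmono _]. unfold f.
  assert (Fd M t (z M n) <= Fd M t (z M (n + 1))) by (apply Hmono, z_le; lia || lra). lra.
Qed.

Lemma f_partial_sum_le1 (N : nat) : sum_f_R0 (fun j => f M t (Z.of_nat j - 1)) N <= 1.
Proof.
  assert (Htele : sum_f_R0 (fun j => f M t (Z.of_nat j - 1)) N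
                  = Fd M t (z M (Z.of_nat N)) - Fd M t (z M (-1))).
  { induction N as [|N IH].
    - reflexivity.
    - rewrite tech5, IH. unfold f.
      replace (Z.of_nat (S N) - 1 + 1)%Z with (Z.of_nat (S N)) by lia.
      replace (Z.of_nat (S N) - 1)%Z with (Z.of_nat N) by lia. ring. }
  destruct Fd_distribution as [_ [_ [Hneg _]]].
  rewrite Htele, (Hneg (z M (-1))) by (unfold z; simpl; lra).
  pose proof (nonneg_distribution_le1 _ _ Fd_distribution (z M (Z.of_nat N))). lra.
Qed.

End Demand_weights.

Lemma est_fst_0 (M : model) (bar : bool) (x y : R) :
  fst (est M bar 0) x y = gam M (hor M - 1) * x.
Proof. reflexivity. Qed.

Lemma est_snd_0 (M : model) (bar : bool) (x y : R) :
  snd (est M bar 0) x y = if Rlt_dec y (sf M (hor M - 1)) then 0 else gam M (hor M - 1) * x.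
Proof. reflexivity. Qed.

Lemma est_fst_S (M : model) (bar : bool) (k : nat) (x y : R) :
  fst (est M bar (S k)) x y =
  (if Rlt_dec y (sf M ((hor M - 2 - k) + 1) - theta M) then gam M (hor M - 2 - k) * x
   else gam M (hor M - 2 - k) * x + alpha M *
     fsum (fun m => snd (est M bar k) x (y - z M m) * f M (hor M - 2 - k) m)
          (gidx M (y - sf M ((hor M - 2 - k) + 1)))).
Proof. reflexivity. Qed.

Lemma est_snd_S (M : model) (bar : bool) (k : nat) (x y : R) :
  snd (est M bar (S k)) x y =
  (if Rlt_dec y (sf M (hor M - 2 - k)) then 0
   else if Rlt_dec (y - x) (sf M (hor M - 2 - k)) then
     fst (est M bar (S k)) (if bar then y - sf M (hor M - 2 - k) + theta M
                            else y - sf M (hor M - 2 - k)) y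
   else fst (est M bar (S k)) x y).
Proof. reflexivity. Qed.

Definition nonneg_nondecr_l (g : R -> R -> R) : Prop :=
  (forall x y, 0 <= x -> 0 <= g x y) /\
  (forall x x' y, 0 <= x <= x' -> g x y <= g x' y).

Definition nondecr_r (g : R -> R -> R) : Prop :=
  forall x y y', 0 <= x -> y <= y' -> g x y <= g x y'.

Section Estimates.
Variable M : model.
Hypothesis alpha_ge0 : 0 <= alpha M.
Hypothesis theta_gt0 : 0 < theta M.
Hypothesis gam_ge0 : forall t, (t <= hor M - 1)%nat -> 0 <= gam M t.
Hypothesis weights_ge0 : forall t n, (t <= hor M - 1)%nat -> 0 <= f M t n.

Lemma est_fst_S_ge (bar : bool) (k : nat) (x y : R) :
  (forall x y, 0 <= x -> 0 <= snd (est M bar k) x y) -> 0 <= x ->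
  gam M (hor M - 2 - k) * x <= fst (est M bar (S k)) x y.
Proof.
  intros Hsnd Hx. rewrite est_fst_S. destruct Rlt_dec; [lra|].
  assert (0 <= alpha M * fsum (fun m => snd (est M bar k) x (y - z M m) * f M (hor M - 2 - k) m)
                              (gidx M (y - sf M (hor M - 2 - k + 1)))); [|lra].
  apply Rmult_le_pos, fsum_ge0; [assumption|]. intros m.
  apply Rmult_le_pos; [apply Hsnd, Hx | apply weights_ge0; lia].
Qed.

Lemma est_fst_S_nonneg_nondecr_l (bar : bool) (k : nat) :
  nonneg_nondecr_l (snd (est M bar k)) -> nonneg_nondecr_l (fst (est M bar (S k))).
Proof.
  intros [Hpos Hmono]. pose proof (gam_ge0 (hor M - 2 - k) ltac:(lia)). split.
  - intros x y Hx. eapply Rle_trans; [|apply est_fst_S_ge; assumption].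
    apply Rmult_le_pos; assumption.
  - intros x x' y Hx. rewrite !est_fst_S. destruct Rlt_dec.
    + apply Rmult_le_compat_l; lra.
    + apply Rplus_le_compat; [apply Rmult_le_compat_l; lra|].
      apply Rmult_le_compat_l, fsum_le; [assumption|]. intros m.
      apply Rmult_le_compat_r; [apply weights_ge0; lia | apply Hmono, Hx].
Qed.

Lemma est_snd_nonneg_nondecr_l (bar : bool) (k : nat) : nonneg_nondecr_l (snd (est M bar k)).
Proof.
  induction k as [|k IH].
  - pose proof (gam_ge0 (hor M - 1) (le_n _)). split.
    + intros x y Hx. rewrite est_snd_0. destruct Rlt_dec; [lra|]. apply Rmult_le_pos; assumption.
    + intros x x' y Hx. rewrite !est_snd_0. destruct Rlt_dec; [lra|]. apply Rmult_le_compat_l; lra.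
  - destruct (est_fst_S_nonneg_nondecr_l bar k IH) as [Hpos Hmono]. split.
    + intros x y Hx. rewrite est_snd_S. destruct Rlt_dec; [lra|].
      destruct Rlt_dec; apply Hpos; [destruct bar|]; lra.
    + intros x x' y Hx. rewrite !est_snd_S. destruct Rlt_dec; [lra|].
      destruct (Rlt_dec (y - x)), (Rlt_dec (y - x')); try lra;
        apply Hmono; [destruct bar|]; lra.
Qed.

Lemma est_fst_nonneg_nondecr_l (bar : bool) (k : nat) : nonneg_nondecr_l (fst (est M bar k)).
Proof.
  destruct k as [|k].
  - pose proof (gam_ge0 (hor M - 1) (le_n _)). split; intros; rewrite ?est_fst_0.
    + apply Rmult_le_pos; assumption.
    + apply Rmult_le_compat_l; lra.
  - apply est_fst_S_nonneg_nondecr_l, est_snd_nonneg_nondecr_l.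
Qed.

Lemma est_fst_S_nondecr_r (k : nat) :
  nondecr_r (snd (est M false k)) -> nondecr_r (fst (est M false (S k))).
Proof.
  intros Hsnd x y y' Hx Hy.
  destruct (est_snd_nonneg_nondecr_l false k) as [Hpos _].
  pose proof (est_fst_S_ge false k x y' Hpos Hx).
  rewrite (est_fst_S _ _ _ x y). destruct Rlt_dec; [assumption|].
  rewrite est_fst_S. destruct Rlt_dec; [lra|].
  apply Rplus_le_compat_l, Rmult_le_compat_l; [assumption|].
  eapply Rle_trans; [apply fsum_le_upper|apply fsum_le].
  - intros m. apply Rmult_le_pos; [apply Hpos, Hx | apply weights_ge0; lia].
  - apply gidx_le; lra.
  - intros m. apply Rmult_le_compat_r; [apply weights_ge0; lia | apply Hsnd; lra].
Qed.

Lemma est_snd_nondecr_r (k : nat) : nondecr_r (snd (est M false k)).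
Proof.
  induction k as [|k IH].
  - pose proof (gam_ge0 (hor M - 1) (le_n _)).
    intros x y y' Hx Hy. rewrite !est_snd_0.
    destruct Rlt_dec, Rlt_dec; try lra. apply Rmult_le_pos; assumption.
  - pose proof (est_fst_S_nondecr_r k IH) as Hr.
    destruct (est_fst_nonneg_nondecr_l false (S k)) as [Hpos Hmono].
    intros x y y' Hx Hy. rewrite !est_snd_S. set (s := sf M (hor M - 2 - k)).
    destruct (Rlt_dec y s), (Rlt_dec y' s); try lra.
    + destruct Rlt_dec; apply Hpos; lra.
    + destruct (Rlt_dec (y - x)), (Rlt_dec (y' - x)); try lra.
      * apply Rle_trans with (fst (est M false (S k)) (y' - s) y); [apply Hmono; lra|].
        apply Hr; lra.
      * apply Rle_trans with (fst (est M false (S k)) x y); [apply Hmono; lra|].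
        apply Hr; lra.
      * apply Hr; lra.
Qed.

Lemma est_fst_nondecr_r (k : nat) : nondecr_r (fst (est M false k)).
Proof.
  destruct k as [|k].
  - intros x y y' _ _. rewrite !est_fst_0. lra.
  - apply est_fst_S_nondecr_r, est_snd_nondecr_r.
Qed.

Lemma est_fst_S_le_bar (k : nat) :
  (forall x y, 0 <= x -> snd (est M false k) x y <= snd (est M true k) x y) ->
  forall x y, 0 <= x -> fst (est M false (S k)) x y <= fst (est M true (S k)) x y.
Proof.
  intros Hsnd x y Hx. rewrite !est_fst_S. destruct Rlt_dec; [lra|].
  apply Rplus_le_compat_l, Rmult_le_compat_l, fsum_le; [assumption|]. intros m.
  apply Rmult_le_compat_r; [apply weights_ge0; lia | apply Hsnd, Hx].
Qed.

Lemma est_snd_le_bar (k : nat) (x y : R) :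
  0 <= x -> snd (est M false k) x y <= snd (est M true k) x y.
Proof.
  revert x y. induction k as [|k IH]; intros x y Hx.
  - rewrite !est_snd_0. lra.
  - pose proof (est_fst_S_le_bar k IH) as Hle.
    destruct (est_fst_nonneg_nondecr_l true (S k)) as [_ Hmono].
    rewrite !est_snd_S. destruct Rlt_dec; [lra|]. destruct Rlt_dec; [|apply Hle, Hx].
    eapply Rle_trans; [apply Hle | apply Hmono]; lra.
Qed.

Lemma est_fst_le_bar (k : nat) (x y : R) :
  0 <= x -> fst (est M false k) x y <= fst (est M true k) x y.
Proof.
  destruct k as [|k]; intros Hx.
  - rewrite !est_fst_0. lra.
  - apply est_fst_S_le_bar; [intros; apply est_snd_le_bar|]; assumption.
Qed.

Lemma psi_ge (t : nat) (x y : R) :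
  (2 <= hor M)%nat -> (t <= hor M - 2)%nat -> 0 <= x -> gam M t * x <= psi M t x y.
Proof.
  intros Hhor Ht Hx. unfold psi.
  replace (hor M - 1 - t)%nat with (S (hor M - 2 - t)) by lia.
  replace t with (hor M - 2 - (hor M - 2 - t))%nat at 1 by lia.
  apply est_fst_S_ge; [apply est_snd_nonneg_nondecr_l | assumption].
Qed.

Lemma psi_le_psib (t : nat) (x u v : R) :
  0 <= x -> u <= v -> psi M t x u <= psib M t x v.
Proof.
  intros Hx Huv. unfold psi, psib.
  eapply Rle_trans; [apply est_fst_nondecr_r | apply est_fst_le_bar]; eassumption.
Qed.

End Estimates.

Definition exp_omegab (M : model) (t : nat) (u : R) : R :=
  gsum (fun n => omegab M (t + 1) (u - z M n) * f M t n).

Lemma omegab_last (M : model) (x : R) : omegab M (hor M - 1) x = 0.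
Proof. unfold omegab. rewrite Nat.sub_diag. reflexivity. Qed.

Lemma omega_eq (M : model) (t : nat) (x : R) :
  (2 <= hor M)%nat -> (t <= hor M - 2)%nat ->
  omega M t x = psi M t (theta M) x - gam M t * theta M + alpha M * exp_omegab M t x.
Proof.
  intros Hhor Ht. unfold omega, exp_omegab, omegab.
  replace (hor M - 1 - t)%nat with (S (hor M - 2 - t)) by lia.
  replace (hor M - 1 - (t + 1))%nat with (hor M - 2 - t)%nat by lia.
  cbn [om fst snd]. replace (hor M - 2 - (hor M - 2 - t))%nat with t by lia. reflexivity.
Qed.

Lemma omegab_eq (M : model) (t : nat) (x : R) :
  (2 <= hor M)%nat -> (t <= hor M - 2)%nat ->
  omegab M t x =
  let eta := psib M t (theta M) (SU M t) + omega M t (SU M t) in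
  if Rle_dec x (SU M t) then eta else Rmax eta (omega M t x).
Proof.
  intros Hhor Ht. unfold omegab, omega.
  replace (hor M - 1 - t)%nat with (S (hor M - 2 - t)) by lia.
  cbn [om fst snd]. replace (hor M - 2 - (hor M - 2 - t))%nat with t by lia. reflexivity.
Qed.

Section Error_bounds.
Variable M : model.
Hypothesis HM : standing_assumptions M.

Let hor_ge2 : (2 <= hor M)%nat.
Proof. apply HM. Qed.

Let alpha_ge0 : 0 <= alpha M.
Proof. destruct HM as [_ [Ha _]]. lra. Qed.

Let theta_gt0 : 0 < theta M.
Proof. apply HM. Qed.

Let gam_ge0 (t : nat) : (t <= hor M - 1)%nat -> 0 <= gam M t.
Proof. intros Ht. apply HM, Ht. Qed.

Let Fd_distribution (t : nat) :
  (t <= hor M - 1)%nat -> nonneg_distribution (Fd M t) (meanD M t).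
Proof. intros Ht. apply HM, Ht. Qed.

Let weights_ge0 (t : nat) (n : Z) : (t <= hor M - 1)%nat -> 0 <= f M t n.
Proof. intros Ht. apply f_ge0; [apply theta_gt0 | apply Fd_distribution, Ht]. Qed.

Lemma psib_ge0 (t : nat) (x y : R) : 0 <= x -> 0 <= psib M t x y.
Proof. intros Hx. apply est_fst_nonneg_nondecr_l; assumption. Qed.

Section Step.
Variable t : nat.
Hypothesis t_le : (t <= hor M - 2)%nat.
Hypothesis omegab_next_ge0 : forall x, 0 <= omegab M (t + 1) x.
Hypothesis omegab_next_incr : increasing (omegab M (t + 1)).

Let exp_omegab_ex_series (u : R) :
  ex_series (fun j => omegab M (t + 1) (u - z M (Z.of_nat j - 1)) * f M t (Z.of_nat j - 1)).
Proof. apply ex_series_Rabs. destruct HM as [_ [_ [_ [_ [_ [_ [_ [_ [_ Hex]]]]]]]]]. apply Hex, t_le. Qed.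

(* Demand is nonnegative, so every shifted argument [u - z_n], [n >= -1], is at most [u + theta]. *)
Lemma exp_omegab_le (u : R) : exp_omegab M t u <= omegab M (t + 1) (u + theta M).
Proof.
  apply (Series_weighted_le (fun j => omegab M (t + 1) (u - z M (Z.of_nat j - 1)))).
  - apply exp_omegab_ex_series.
  - intros j. apply weights_ge0. lia.
  - intros N. apply f_partial_sum_le1; [apply theta_gt0 | apply Fd_distribution; lia].
  - apply omegab_next_ge0.
  - intros j. apply omegab_next_incr.
    assert (Hz : z M (-1) <= z M (Z.of_nat j - 1)) by (apply z_le; lia || lra).
    unfold z at 1 in Hz. simpl in Hz. lra.
Qed.

Lemma exp_omegab_ge0 (u : R) : 0 <= exp_omegab M t u.
Proof.
  apply Series_ge0; [apply exp_omegab_ex_series|]. intros j.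
  apply Rmult_le_pos; [apply omegab_next_ge0 | apply weights_ge0; lia].
Qed.

Lemma exp_omegab_incr : increasing (exp_omegab M t).
Proof.
  intros u v Huv. apply Series_le; [|apply exp_omegab_ex_series]. intros j.
  pose proof (weights_ge0 t (Z.of_nat j - 1) ltac:(lia)). split.
  - apply Rmult_le_pos; [apply omegab_next_ge0 | assumption].
  - apply Rmult_le_compat_r; [assumption|]. apply omegab_next_incr. lra.
Qed.

Lemma omega_ge0 (u : R) : 0 <= omega M t u.
Proof.
  rewrite omega_eq by assumption.
  assert (gam M t * theta M <= psi M t (theta M) u) by (apply psi_ge; assumption || lra).
  pose proof (Rmult_le_pos _ _ alpha_ge0 (exp_omegab_ge0 u)). lra.
Qed.

Lemma omega_le (u v : R) :
  u <= v -> omega M t u <= psib M t (theta M) v - gam M t * theta M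
                            + alpha M * omegab M (t + 1) (v + theta M).
Proof.
  intros Huv. rewrite omega_eq by assumption.
  assert (psi M t (theta M) u <= psib M t (theta M) v) by (apply psi_le_psib; assumption || lra).
  assert (Hexp : exp_omegab M t u <= omegab M (t + 1) (v + theta M)).
  { eapply Rle_trans; [apply exp_omegab_le | apply omegab_next_incr; lra]. }
  pose proof (Rmult_le_compat_l _ _ _ alpha_ge0 Hexp). lra.
Qed.

Lemma omega_incr : increasing (omega M t).
Proof.
  intros u v Huv. rewrite !omega_eq by assumption.
  assert (psi M t (theta M) u <= psi M t (theta M) v).
  { apply est_fst_nondecr_r; assumption || lra. }
  pose proof (Rmult_le_compat_l _ _ _ alpha_ge0 (exp_omegab_incr u v Huv)). lra.
Qed.

Lemma omegab_ge0_incr_step : (forall x, 0 <= omegab M t x) /\ increasing (omegab M t).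
Proof.
  assert (Heta : 0 <= psib M t (theta M) (SU M t) + omega M t (SU M t)).
  { apply Rplus_le_le_0_compat; [apply psib_ge0; lra | apply omega_ge0]. }
  split.
  - intros x. rewrite omegab_eq by assumption. cbv zeta.
    destruct Rle_dec; [assumption|]. eapply Rle_trans; [exact Heta | apply Rmax_l].
  - intros x x' Hx. rewrite !omegab_eq by assumption. cbv zeta.
    destruct (Rle_dec x (SU M t)), (Rle_dec x' (SU M t)); try lra.
    + apply Rmax_l.
    + apply Rle_max_compat_l, omega_incr, Hx.
Qed.

End Step.

Lemma omegab_ge0_incr (t : nat) :
  (t <= hor M - 1)%nat -> (forall x, 0 <= omegab M t x) /\ increasing (omegab M t).
Proof.
  remember (hor M - 1 - t)%nat as k eqn:Hk. revert t Hk.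
  induction k as [|k IH]; intros t Hk Ht.
  - replace t with (hor M - 1)%nat by lia.
    split; [intros x | intros x x' _]; rewrite !omegab_last; lra.
  - destruct (IH (t + 1)%nat ltac:(lia) ltac:(lia)) as [Hpos Hincr].
    apply omegab_ge0_incr_step; [lia | exact Hpos | exact Hincr].
Qed.

End Error_bounds.

Theorem lemma4p8 (M : model) :
  standing_assumptions M ->
  forall t : nat, (t <= hor M - 2)%nat -> forall x : R,
    omegab M t x <=
      psib M t (theta M) (SU M t) + psib M t (theta M) (Rmax x (SU M t))
      - gam M t * theta M
      + alpha M * omegab M (t + 1) (theta M + Rmax x (SU M t)).
Proof.
  intros HM t Ht x. pose proof HM as [Hhor [_ [Htheta _]]].
  destruct (omegab_ge0_incr M HM (t + 1) ltac:(lia)) as [Hpos Hincr].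
  assert (Hbound : forall u v, u <= v ->
    omega M t u <= psib M t (theta M) v - gam M t * theta M
                   + alpha M * omegab M (t + 1) (theta M + v)).
  { intros u v Huv. rewrite (Rplus_comm (theta M) v). apply omega_le; assumption. }
  assert (Hpsib : 0 <= psib M t (theta M) (SU M t)).
  { apply psib_ge0; [assumption | lra]. }
  rewrite omegab_eq by assumption. cbv zeta.
  destruct (Rle_dec x (SU M t)) as [Hx|Hx].
  - rewrite Rmax_right by assumption.
    pose proof (Hbound (SU M t) (SU M t) (Rle_refl _)). lra.
  - apply Rnot_le_lt in Hx. rewrite (Rmax_left x (SU M t)) by lra. apply Rmax_lub.
    + pose proof (Hbound (SU M t) x ltac:(lra)). lra.
    + pose proof (Hbound x x (Rle_refl _)). lra.
Qed.
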